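(* In the reduction instance $NTP([a_j]_{j\in A},W)$, every feasible schedule $S$ satisfies $B(S)=\sum_{k\in A}b_{i_k}$, i.e. all potential bumps are caused by critical employees.
   Context: Reduction instance. Let $N\ge1$, $A=\{1,\dots,N\}$, positive integers $a_1,\dots,a_N$, positive integer $W\le\sum_{j\in A}a_j$. Set $M=N+\sum_{j\in A}a_j+1$, employees $\mathcal E=\{1,\dots,M\}$ (smaller index = more senior). For $k\in A$: $i_k=k+\sum_{j=1}^{k-1}a_j$ (critical employees), $\mathcal E^S_k=\{i: i_k<i\le i_k+a_k\}$ (stable block), $\mathcal E^S=\bigcup_k\mathcal E^S_k$. Response delays: $r_{i_k}=\sum_{j=1}^{k}a_j$; for $i\in\mathcal E^S_k$, $r_i=\sum_{j=1}^{k-1}a_j$; $r_M=\sum_{j\in A}a_j$. Let $C^*_0=2\sum_j a_j$ and $H=C^*_0-W$. A schedule $S=(s_i,e_i)_{i\in\mathcal E}$ has $s_i\ge0$, $e_i=s_i+r_i$; it is feasible if $s_1\le\dots\le s_M$ and $e_i\le H$ for all $i$. $b_i=|\{j: i<j,\ e_j<e_i\}|$, $B(S)=\sum_i b_i$. *)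

From HB Require Import structures.
From mathcomp Require Import all_boot all_order all_algebra.
Set Implicit Arguments. Unset Strict Implicit. Unset Printing Implicit Defensive.
Import Order.TTheory GRing.Theory Num.Theory.

(* A = {1..N}; a : nat -> nat, only a 1 .. a N are relevant. *)

Definition psum (a : nat -> nat) (k : nat) : nat := \sum_(1 <= j < k.+1) a j.

Definition nEmp (N : nat) (a : nat -> nat) : nat := N + psum a N + 1.

Definition crit (a : nat -> nat) (k : nat) : nat := k + psum a k.-1.

Definition in_stable (a : nat -> nat) (k i : nat) : bool :=
  (crit a k < i) && (i <= crit a k + a k).

(* response delay r_i (the critical employees, stable blocks and M are
   pairwise disjoint and cover {1..M}, so exactly one term is active) *)
Definition delay (N : nat) (a : nat -> nat) (i : nat) : nat :=
  \sum_(1 <= k < N.+1)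
     (if i == crit a k then psum a k
      else if in_stable a k i then psum a k.-1 else 0)
  + (if i == nEmp N a then psum a N else 0).

Definition horizon (N : nat) (a : nat -> nat) (W : nat) : nat :=
  2 * psum a N - W.

Section Sched.
Variable R : realDomainType.
Local Open Scope ring_scope.

Definition endt (N : nat) (a : nat -> nat) (s : nat -> R) (i : nat) : R :=
  s i + (delay N a i)%:R.

Definition feasible (N : nat) (a : nat -> nat) (W : nat) (s : nat -> R) : Prop :=
  [/\ (forall i, (1 <= i <= nEmp N a)%N -> 0 <= s i),
      (forall i, (1 <= i < nEmp N a)%N -> s i <= s i.+1)
    & (forall i, (1 <= i <= nEmp N a)%N -> endt N a s i <= (horizon N a W)%:R)].

Definition bumps (N : nat) (a : nat -> nat) (s : nat -> R) (i : nat) : nat :=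
  count (fun j => endt N a s j < endt N a s i) (iota i.+1 (nEmp N a - i)).

Definition totbumps (N : nat) (a : nat -> nat) (s : nat -> R) : nat :=
  \sum_(1 <= i < (nEmp N a).+1) bumps N a s i.
End Sched.

(* Within block k the employees i_k < i <= i_k + a_k have delay sum_{j<k} a_j,
   the least delay of anyone at or after them in seniority, while start times
   are nondecreasing in the index; hence their end times are at most those of
   every junior employee and they bump nobody.  Employee M has no juniors at
   all, so only the critical employees can contribute to B(S). *)
From mathcomp Require Import all_boot all_order all_algebra.
From mathcomp Require Import zify.
Import Order.TTheory GRing.Theory Num.Theory.
Set Implicit Arguments. Unset Strict Implicit.

Lemma psumS a k : psum a k.+1 = psum a k + a k.+1.
Proof. by rewrite /psum big_nat_recr. Qed.

Lemma leq_psum a k1 k2 : (k1 <= k2)%N -> (psum a k1 <= psum a k2)%N.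
Proof.
move=> le_k12; rewrite /psum (@big_cat_nat _ _ _ k1.+1 1 k2.+1) //=.
exact: leq_addr.
Qed.

Lemma critSE a k : crit a k.+1 = k + psum a k + 1.
Proof. rewrite /crit /=; lia. Qed.

Lemma crit1 a : crit a 1 = 1%N.
Proof. by rewrite /crit /psum big_geq. Qed.

Lemma nEmp_crit N a : nEmp N a = crit a N.+1.
Proof. by rewrite critSE. Qed.

Lemma critS a k : (0 < k)%N -> crit a k.+1 = crit a k + a k + 1.
Proof. by case: k => // k _; rewrite critSE /crit psumS /=; lia. Qed.

Lemma crit_block_lt a k1 k2 : (0 < k1)%N -> (k1 < k2)%N ->
  (crit a k1 + a k1 < crit a k2)%N.
Proof.
move=> k1_gt0 lt_k12; have := critS a k1_gt0.
have : (k1 <= k2.-1)%N by rewrite -ltnS (ltn_predK lt_k12).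
move/(leq_psum a); rewrite /crit -(ltn_predK lt_k12) /=; lia.
Qed.

Lemma crit_block_exists a n j : (0 < j < crit a n.+1)%N ->
  exists2 k, (1 <= k <= n)%N & (crit a k <= j <= crit a k + a k)%N.
Proof.
elim: n => [|n IHn] /andP[j_gt0 lt_j]; first by move: lt_j; rewrite crit1; lia.
have [lt_jn | ge_jn] := ltnP j (crit a n.+1).
  by have [k k_n j_k] := IHn (introT andP (conj j_gt0 lt_jn)); exists k => //; lia.
by exists n.+1; last (move: lt_j; rewrite critS //); lia.
Qed.

Section Delays.
Variables (N : nat) (a : nat -> nat).

Lemma delay_block k j : (1 <= k <= N)%N -> (crit a k <= j <= crit a k + a k)%N ->
  delay N a j = if j == crit a k then psum a k else psum a k.-1.
Proof.
move=> /andP[k_gt0 k_le] j_k.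
have lt_kN : (k < N.+1)%N by [].
have not_crit_stable k' : (0 < k')%N -> k' != k ->
    (if j == crit a k' then psum a k' else
     if in_stable a k' j then psum a k'.-1 else 0) = 0%N.
  move=> k'_gt0 ne_k'k.
  suff [/negbTE-> /negbTE->] : j != crit a k' /\ ~~ in_stable a k' j by [].
  rewrite /in_stable; have [lt_k'k | lt_kk' | eq_k'k] := ltngtP k' k.
  - by have := crit_block_lt a k'_gt0 lt_k'k; lia.
  - by have := crit_block_lt a k_gt0 lt_kk'; lia.
  - by rewrite eq_k'k eqxx in ne_k'k.
rewrite /delay ifN_eq; last first.
  by rewrite nEmp_crit; have := crit_block_lt a k_gt0 lt_kN; lia.
rewrite addn0 (bigD1_seq k) ?iota_uniq ?mem_index_iota ?k_gt0 //=.
rewrite big_seq_cond big1 ?addn0 => [|k' /andP[]]; last first.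
  by rewrite mem_index_iota => /andP[+ _]; exact: not_crit_stable.
by case: eqP => // ne_jk; rewrite /in_stable ifT //; lia.
Qed.

Lemma delay_nEmp : delay N a (nEmp N a) = psum a N.
Proof.
rewrite /delay eqxx big_nat_cond big1 ?add0n // => k /andP[/andP[k_gt0 lt_kN] _].
have := crit_block_lt a k_gt0 lt_kN; rewrite -nEmp_crit => lt_kM.
suff [/negbTE-> /negbTE->] : nEmp N a != crit a k /\ ~~ in_stable a k (nEmp N a) by [].
by rewrite /in_stable; lia.
Qed.

Lemma delay_stable k i : (1 <= k <= N)%N -> (crit a k < i <= crit a k + a k)%N ->
  delay N a i = psum a k.-1.
Proof.
by move=> k_N i_k; rewrite (delay_block k_N) ?ifN_eq //; lia.
Qed.

Lemma delay_ge_stable k j : (1 <= k <= N)%N -> (crit a k < j <= nEmp N a)%N ->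
  (psum a k.-1 <= delay N a j)%N.
Proof.
move=> /andP[k_gt0 k_le] /andP[lt_kj j_le].
have [->|lt_jM] := eqVneq j (nEmp N a).
  by rewrite delay_nEmp leq_psum //; lia.
have [m m_N j_m] : exists2 m, (1 <= m <= N)%N & (crit a m <= j <= crit a m + a m)%N.
  by apply: crit_block_exists; rewrite -nEmp_crit; lia.
have le_km : (k <= m)%N.
  rewrite leqNgt; apply/negP => lt_mk.
  by have := crit_block_lt a (proj1 (andP m_N)) lt_mk; lia.
by rewrite (delay_block m_N j_m); case: eqP => _; apply: leq_psum; lia.
Qed.

End Delays.

Section Bumps.
Variables (R : realDomainType) (N : nat) (a : nat -> nat) (W : nat) (s : nat -> R).
Local Open Scope ring_scope.

Lemma bumps_eq0 i :
  (forall j, (i < j <= nEmp N a)%N -> endt N a s i <= endt N a s j) ->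
  bumps N a s i = 0%N.
Proof.
move=> le_end; apply/eqP; rewrite eqn0Ngt -has_count; apply/hasPn => j.
by rewrite mem_iota -leNgt => j_i; apply: le_end; lia.
Qed.

Lemma bumps_nEmp : bumps N a s (nEmp N a) = 0%N.
Proof. by rewrite /bumps subnn. Qed.

Hypothesis feasible_s : feasible N a W s.

Lemma feasible_start_mono i j : (0 < i)%N -> (i <= j <= nEmp N a)%N -> s i <= s j.
Proof.
case: feasible_s => _ s_step _ i_gt0 /andP[le_ij j_le].
pose D := [pred n | 0 < n <= nEmp N a]%N.
apply: (@homo_leq_in _ D s _ (@lexx _ R) (fun _ _ _ => @le_trans _ R _ _ _));
  rewrite ?inE //; try lia.
- by move=> ? ? + + ?; rewrite !inE; lia.
- by move=> n; rewrite !inE => /andP[n_gt0 _] /andP[_ ?]; apply: s_step; lia.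
Qed.

Lemma bumps_stable k i : (1 <= k <= N)%N -> (crit a k < i <= crit a k + a k)%N ->
  bumps N a s i = 0%N.
Proof.
move=> k_N i_k.
have lt_iM : (i < nEmp N a)%N.
  rewrite nEmp_crit; case/andP: k_N => k_gt0 k_le.
  by have := crit_block_lt a k_gt0 (k_le : (k < N.+1)%N); lia.
apply: bumps_eq0 => j j_i; rewrite /endt (delay_stable k_N i_k).
apply: lerD; first by apply: feasible_start_mono; lia.
by rewrite ler_nat; apply: delay_ge_stable; lia.
Qed.

Lemma sum_bumps_crit k : (k <= N)%N ->
  (\sum_(1 <= i < crit a k.+1) bumps N a s i =
   \sum_(1 <= j < k.+1) bumps N a s (crit a j))%N.
Proof.
elim: k => [|k IHk] le_kN; first by rewrite crit1 !big_geq.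
rewrite [RHS]big_nat_recr //= -IHk 1?ltnW //.
rewrite (@big_cat_nat _ _ _ (crit a k.+1)) //=; last by rewrite !critSE psumS; lia.
congr (_ + _)%N; rewrite big_ltn; last by rewrite (critS a (ltn0Sn k)); lia.
rewrite big_nat_cond big1 ?addn0 // => i /andP[+ _].
by rewrite (critS a (ltn0Sn k)) => i_k; apply: (@bumps_stable k.+1); lia.
Qed.

End Bumps.

Theorem corollary3 (R : realDomainType) (N : nat) (a : nat -> nat) (W : nat)
    (s : nat -> R) :
  (1 <= N)%N ->
  (forall j, (1 <= j <= N)%N -> (0 < a j)%N) ->
  (0 < W)%N -> (W <= psum a N)%N ->
  feasible N a W s ->
  totbumps N a s = (\sum_(1 <= k < N.+1) bumps N a s (crit a k))%N.
Proof.
move=> _ _ _ _ feasible_s.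
rewrite /totbumps big_nat_recr /=; last by rewrite /nEmp addn1.
by rewrite bumps_nEmp addn0 nEmp_crit (sum_bumps_crit feasible_s).
Qed.
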